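(* Let $W\subset D_2(H)$ be the subgroup generated by all elements $T(a_i,b_j;b_k,b_l)$, $1\le i,j,k,l\le g$, and let $N:=\operatorname{Ker}(\operatorname{Tr}^A|_W:W\to S^2(H'))$. For indices set $①_{i,j,k,l}:=T(a_i,b_j;b_k,b_l)$, $②_{i,j,k}:=T(a_i,b_j;b_k,b_i)$, $③_{i,k,l}:=T(a_i,b_i;b_k,b_l)$, $④_{i,k}:=T(a_i,b_i;b_k,b_i)$, always with $i$ different from $j,k,l$. Then $N$ is generated by all elements $①_{i,j,k,l}$, all elements $③_{i,k,l}$, and the elements $$②_{i,j,j}-②_{i',j,j},\quad ②_{i,j,k}-②_{i',j,k},\quad ②_{i,j,k}-②_{i',k,j},\quad ②_{i,j,k}-④_{j,k},\quad ②_{i,j,k}-④_{k,j},\quad ④_{i,k}-④_{k,i},$$ where $i,i'\notin\{j,k\}$ and $j\ne k$ (and $i\ne k$ in $④_{i,k}$).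
   Context: Let $g\ge 2$, $\Sigma_{g,1}$ a compact connected oriented surface of genus $g$ with one boundary component, $H=H_1(\Sigma_{g,1};\mathbb Z)$ with intersection form $\omega$, $\mathcal L(H)$ the free Lie ring on $H$ embedded in $T(H)$ via $[x,y]=x\otimes y-y\otimes x$, and $D_2(H):=\ker(H\otimes\mathcal L_3(H)\to\mathcal L_4(H),\ h\otimes u\mapsto[h,u])$. For $a,b,c,d\in H$, $T(a,b;c,d):=a\otimes[b,[c,d]]+b\otimes[[c,d],a]+c\otimes[d,[a,b]]+d\otimes[[a,b],c]\in D_2(H)$. Let $V_g$ be a handlebody with $\Sigma_{g,1}\subset\partial V_g$; $A:=\ker(H\to H_1(V_g;\mathbb Z))$, $H':=H/A$, $x'$ the class of $x\in H$; fix a symplectic basis $(a_1,\dots,a_g,b_1,\dots,b_g)$ of $H$ ($\omega(a_i,b_j)=\delta_{ij}$, $\omega(a_i,a_j)=\omega(b_i,b_j)=0$) with $a_i\in A$. $\omega':A\times H'\to\mathbb Z$, $\omega'(a,x')=\omega(a,x)$. With $p:H\otimes\mathcal L_3(H)\to H\otimes\mathcal L_3(H')$ induced by $H\to H'$ and $K_A:=\ker(D_2(H)\to D_2(H'))$ (so $p(K_A)\subset A\otimes\mathcal L_3(H')$; all elements $T(a_i,\cdot;\cdot,\cdot)$ above lie in $K_A$), $\operatorname{Tr}^A:K_A\to S^2(H')$ is the composite of $p$, $A\otimes\mathcal L_3(H')\subset A\otimes H'^{\otimes3}$, the contraction $a\otimes x\otimes y\otimes z\mapsto\omega'(a,x)\,y\otimes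 z$, and projection to $S^2(H')$. *)

From mathcomp Require Import all_boot all_order all_algebra.
Set Implicit Arguments. Unset Strict Implicit. Unset Printing Implicit Defensive.
Import GRing.Theory Num.Theory.
Local Open Scope ring_scope.

(* H = H_1(Sigma_{g,1};Z) = Z^{2g} with symplectic basis a_1..a_g, b_1..b_g.
   Basis index type: inl i = a_i, inr i = b_i. *)
Definition B (g : nat) : finType := ('I_g + 'I_g)%type.

Definition vec (g : nat) := {ffun B g -> int}.
Definition ebasis g (x : B g) : vec g := [ffun y => ((x == y) : nat)%:Z].
Definition a_ g (i : 'I_g) : vec g := ebasis (inl i).
Definition b_ g (i : 'I_g) : vec g := ebasis (inr i).

Definition omega g (x y : B g) : int :=
  match x, y with
  | inl i, inr j => ((i == j) : nat)%:Z
  | inr i, inl j => - ((i == j) : nat)%:Z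
  | _, _ => 0
  end.

(* H^{(x)4}, the ambient group of H (x) L_3(H) (hence of D_2(H)),
   via L(H) in T(H). Coefficients w.r.t. the basis e_x(x)e_y(x)e_z(x)e_w. *)
Definition T4 (g : nat) := {ffun B g * B g * B g * B g -> int}.

Definition br11 g (u v : vec g) : B g -> B g -> int :=
  fun y z => u y * v z - v y * u z.
Definition br12 g (u : vec g) (m : B g -> B g -> int) : B g -> B g -> B g -> int :=
  fun y z w => u y * m z w - m y z * u w.
Definition br21 g (m : B g -> B g -> int) (u : vec g) : B g -> B g -> B g -> int :=
  fun y z w => m y z * u w - u y * m z w.

(* T(a,b;c,d) = a(x)[b,[c,d]] + b(x)[[c,d],a] + c(x)[d,[a,b]] + d(x)[[a,b],c] *)
Definition Tel g (a b c d : vec g) : T4 g :=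
  [ffun p => let '(x, y, z, w) := p in
     a x * br12 b (br11 c d) y z w + b x * br21 (br11 c d) a y z w
   + c x * br12 d (br11 a b) y z w + d x * br21 (br11 a b) c y z w].

Inductive zgen (V : zmodType) (P : V -> Prop) : V -> Prop :=
  | zgen0 : zgen P 0
  | zgen_gen x : P x -> zgen P x
  | zgen_sub x y : zgen P x -> zgen P y -> zgen P (x - y).

(* H' = H/A with A = span(a_i) has basis b'_1..b'_g (images of b_i; a_i |-> 0).
   omega'(a_i, b'_j) = omega(a_i, b_j). *)
Definition omega' g (i j : 'I_g) : int := omega (inl i) (inr j).

(* Contraction of p(t) in A(x)H'^{(x)3}: coefficient of b'_y(x)b'_z in H'(x)H'
   of sum omega'(a,x') y'(x)z'. *)
Definition contrA g (t : T4 g) (y z : 'I_g) : int :=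
  \sum_(i < g) \sum_(j < g) t (inl i, inr j, inr y, inr z) * omega' i j.

(* S^2(H') is free on the monomials b'_y b'_z (y <= z); we record the
   coefficients as a symmetric function on pairs. *)
Definition S2 (g : nat) := {ffun 'I_g * 'I_g -> int}.
Definition proj_S2 g (m : 'I_g -> 'I_g -> int) : S2 g :=
  [ffun yz => if yz.1 == yz.2 then m yz.1 yz.1 else m yz.1 yz.2 + m yz.2 yz.1].

Definition TrA g (t : T4 g) : S2 g := proj_S2 (contrA t).

Definition Wgens g (t : T4 g) : Prop :=
  exists i j k l : 'I_g, t = Tel (a_ i) (b_ j) (b_ k) (b_ l).
Definition W g (t : T4 g) : Prop := zgen (@Wgens g) t.
Definition N g (t : T4 g) : Prop := W t /\ TrA t = 0.

Definition e1 g (i j k l : 'I_g) : T4 g := Tel (a_ i) (b_ j) (b_ k) (b_ l).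
Definition e2 g (i j k : 'I_g) : T4 g := Tel (a_ i) (b_ j) (b_ k) (b_ i).
Definition e3 g (i k l : 'I_g) : T4 g := Tel (a_ i) (b_ i) (b_ k) (b_ l).
Definition e4 g (i k : 'I_g) : T4 g := Tel (a_ i) (b_ i) (b_ k) (b_ i).

Definition Ngens g (t : T4 g) : Prop :=
  (exists i j k l : 'I_g, [/\ i != j, i != k & i != l] /\ t = e1 i j k l)
  \/ (exists i k l : 'I_g, [/\ i != k & i != l] /\ t = e3 i k l)
  \/ (exists i i' j : 'I_g, [/\ i != j & i' != j] /\ t = e2 i j j - e2 i' j j)
  \/ (exists i i' j k : 'I_g, [/\ i \notin [:: j; k], i' \notin [:: j; k] & j != k]
        /\ [\/ t = e2 i j k - e2 i' j k,
               t = e2 i j k - e2 i' k j,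
               t = e2 i j k - e4 j k
             | t = e2 i j k - e4 k j])
  \/ (exists i k : 'I_g, i != k /\ t = e4 i k - e4 k i).

From HB Require Import structures.
From mathcomp Require Import all_boot all_order all_algebra ring zify.
Set Implicit Arguments. Unset Strict Implicit. Unset Printing Implicit Defensive.
Import GRing.Theory.
Local Open Scope ring_scope.

(* Tr^A is additive, and it has an additive section
   [trace_section] from S^2(H') into W: b'_y^2 goes to 2_{y',y,y} (y' <> y)
   and b'_y b'_z (y < z) to 4_{y,z}.  The explicit formula
     Tr^A T(a_i,b_j;b_k,b_l) = [l = i] b'_k b'_j - [k = i] b'_l b'_j
   shows that every generator w of W differs from the section of its trace by
   one of the proposed generators (or their negative, or zero).  A general
   lemma on abelian groups, [kernel_generated], then says that W /\ ker Tr^A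
   is generated by any family Q lying in W /\ ker Tr^A which contains these
   corrections w - s (Tr^A w).  It remains to check that each proposed
   generator lies in W and has trace zero, which again follows from the
   trace formula. *)

Lemma zgen_diff (V : zmodType) (P : V -> Prop) (x y : V) :
  P x -> P y -> zgen P (x - y).
Proof. by move=> hx hy; apply: zgen_sub; apply: zgen_gen. Qed.

Lemma zgen_opp (V : zmodType) (P : V -> Prop) (x : V) : zgen P x -> zgen P (- x).
Proof. by move=> hx; rewrite -sub0r; apply: zgen_sub => //; apply: zgen0. Qed.

Section KernelGenerators.
Variables (U V : zmodType) (f : {additive U -> V}) (s : {additive V -> U}).
Variables (P Q : U -> Prop).

Lemma zgen_correction :
  (forall p, P p -> zgen Q (p - s (f p))) ->
  forall x, zgen P x -> zgen Q (x - s (f x)).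
Proof.
move=> corrP x; elim=> [|p /corrP //|y z _ hy _ hz].
  by rewrite !raddf0 addr0; apply: zgen0.
have -> : y - z - s (f (y - z)) = (y - s (f y)) - (z - s (f z)).
  rewrite (raddfB f) (raddfB s) !opprB addrACA [RHS]addrACA.
  by rewrite [- s (f y) + _]addrC.
exact: zgen_sub.
Qed.

Lemma kernel_generated :
  (forall p, P p -> zgen Q (p - s (f p))) ->
  (forall q, Q q -> zgen P q /\ f q = 0) ->
  forall x, zgen P x /\ f x = 0 <-> zgen Q x.
Proof.
move=> corrP QinN x; split=> [[hx fx0]|].
  by have := zgen_correction corrP hx; rewrite fx0 raddf0 subr0.
elim=> [|q /QinN //|y z _ [hy fy0] _ [hz fz0]].
  by split; [apply: zgen0 | rewrite raddf0].
by split; [apply: zgen_sub | rewrite raddfB fy0 fz0 subrr].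
Qed.
End KernelGenerators.

Definition delta (T : eqType) (x y : T) : int := ((x == y) : nat)%:Z.

Lemma delta_refl (T : eqType) (x : T) : delta x x = 1.
Proof. by rewrite /delta eqxx. Qed.

Lemma delta_neq (T : eqType) (x y : T) : x != y -> delta x y = 0.
Proof. by rewrite /delta => /negbTE ->. Qed.

Lemma sum_delta_r (T : finType) (F : T -> int) (i : T) :
  \sum_j F j * delta i j = F i.
Proof.
rewrite (bigD1 i) //= delta_refl mulr1 big1 ?addr0 // => j hj.
by rewrite delta_neq ?mulr0 // eq_sym.
Qed.

Lemma sum_delta_l (T : finType) (F : T -> int) (i : T) :
  \sum_j delta i j * F j = F i.
Proof. by rewrite -[RHS](sum_delta_r F i); apply: eq_bigr => j _; rewrite mulrC. Qed.

Lemma a_inl g (i m : 'I_g) : a_ i (inl m) = delta i m.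
Proof. by rewrite ffunE. Qed.
Lemma a_inr g (i m : 'I_g) : a_ i (inr m) = 0.
Proof. by rewrite ffunE. Qed.
Lemma b_inl g (i m : 'I_g) : b_ i (inl m) = 0.
Proof. by rewrite ffunE. Qed.
Lemma b_inr g (i m : 'I_g) : b_ i (inr m) = delta i m.
Proof. by rewrite ffunE. Qed.

Lemma Tel_diag g (a b c : vec g) : Tel a b c c = 0.
Proof. by apply/ffunP => -[[[x y] z] w]; rewrite !ffunE /br12 /br21 /br11; ring. Qed.

Lemma Tel_swap g (a b c d : vec g) : Tel a b c d = - Tel a b d c.
Proof. by apply/ffunP => -[[[x y] z] w]; rewrite !ffunE /br12 /br21 /br11; ring. Qed.

Lemma contrA_Tel g (i j k l y z : 'I_g) :
  contrA (Tel (a_ i) (b_ j) (b_ k) (b_ l)) y z =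
  delta j i * (delta k y * delta l z - delta l y * delta k z)
  - (delta k i * delta l y - delta l i * delta k y) * delta j z.
Proof.
rewrite /contrA (eq_bigr (fun i' => delta i i' *
  (delta j i' * (delta k y * delta l z - delta l y * delta k z)
   - (delta k i' * delta l y - delta l i' * delta k y) * delta j z)))
  ?sum_delta_l // => i' _.
rewrite (eq_bigr (fun j' => Tel (a_ i) (b_ j) (b_ k) (b_ l)
                    (inl i', inr j', inr y, inr z) * delta i' j')) //.
by rewrite sum_delta_r ffunE /br12 /br21 /br11 !a_inl !b_inl !b_inr !a_inr; ring.
Qed.

Definition monom g (k j : 'I_g) : S2 g := proj_S2 (fun u v => delta k u * delta j v).

Lemma monomC g (k j : 'I_g) : monom k j = monom j k.
Proof. by apply/ffunP => -[y z]; rewrite !ffunE /=; case: (y == z); ring. Qed.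

Lemma TrA_Tel g (i j k l : 'I_g) :
  TrA (Tel (a_ i) (b_ j) (b_ k) (b_ l)) =
  (if l == i then monom k j else 0) - (if k == i then monom l j else 0).
Proof.
apply/ffunP => -[y z]; rewrite /TrA /monom !ffunE /= !contrA_Tel /delta.
by case: (l == i); case: (k == i); rewrite !ffunE /=; case: (y == z); ring.
Qed.

Lemma TrA_e2 g (i j k : 'I_g) : k != i -> TrA (e2 i j k) = monom k j.
Proof. by move=> hki; rewrite TrA_Tel eqxx (negbTE hki) subr0. Qed.

Lemma TrA_e4 g (i k : 'I_g) : k != i -> TrA (e4 i k) = monom k i.
Proof. exact: TrA_e2. Qed.

Lemma contrAB g (x y : T4 g) (u v : 'I_g) :
  contrA (x - y) u v = contrA x u v - contrA y u v.
Proof.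
rewrite /contrA -sumrB; apply: eq_bigr => i _; rewrite -sumrB.
by apply: eq_bigr => j _; rewrite !ffunE mulrBl.
Qed.

Lemma TrA_is_zmod_morphism g : zmod_morphism (@TrA g).
Proof.
move=> x y; apply/ffunP => -[u v]; rewrite !ffunE /= !contrAB.
by case: (u == v) => //; ring.
Qed.

HB.instance Definition _ g :=
  GRing.isZmodMorphism.Build (T4 g) (S2 g) (@TrA g) (@TrA_is_zmod_morphism g).

Definition other g (y : 'I_g) : 'I_g := odflt y [pick x | x != y].

Lemma other_neq g (y : 'I_g) : (2 <= g)%N -> other y != y.
Proof.
move=> hg; rewrite /other; case: pickP => [x //|none].
have : #|predC1 y| = 0%N by apply: eq_card0 => x; rewrite !inE none.
by rewrite cardC1 card_ord; lia.
Qed.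

Definition trace_section g (s : S2 g) : T4 g :=
  \sum_(y < g) e2 (other y) y y *~ s (y, y)
  + \sum_(y < g) \sum_(z < g | (y < z)%N) e4 y z *~ s (y, z).

Lemma trace_section_is_zmod_morphism g : zmod_morphism (@trace_section g).
Proof.
move=> s1 s2; rewrite /trace_section opprD addrACA -!sumrB.
congr (_ + _); apply: eq_bigr => y _; first by rewrite !ffunE mulrzBr.
by rewrite -sumrB; apply: eq_bigr => z _; rewrite !ffunE mulrzBr.
Qed.

HB.instance Definition _ g :=
  GRing.isZmodMorphism.Build (S2 g) (T4 g) (@trace_section g)
    (@trace_section_is_zmod_morphism g).

Lemma sum_lt_delta (V : zmodType) g (F : 'I_g -> 'I_g -> V) (k j : 'I_g) :
  \sum_(y < g) \sum_(z < g | (y < z)%N) F y z *~ (delta k y * delta j z)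
  = if (k < j)%N then F k j else 0.
Proof.
rewrite (bigD1 k) //= [X in _ + X]big1 ?addr0 => [|y hyk]; last first.
  by apply: big1 => z _; rewrite delta_neq 1?eq_sym // mul0r mulr0z.
case: ifP => hkj.
  rewrite (bigD1 j) //= !delta_refl mul1r mulr1z big1 ?addr0 // => z /andP[_ hzj].
  by rewrite delta_neq 1?eq_sym // mulr0 mulr0z.
apply: big1 => z hkz; rewrite (delta_neq (x := j)) ?mulr0 ?mulr0z //.
by apply: contraFneq hkj => ->.
Qed.

Lemma trace_section_monom g (k j : 'I_g) :
  trace_section (monom k j) = e2 (other k) k k *~ delta j k
    + (if (k < j)%N then e4 k j else 0) + (if (j < k)%N then e4 j k else 0).
Proof.
rewrite /trace_section -addrA; congr (_ + _).
  rewrite (bigD1 k) //= [X in _ + X]big1 ?addr0 => [|y hyk].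
    by rewrite ffunE /= eqxx delta_refl mul1r.
  by rewrite ffunE /= eqxx delta_neq 1?eq_sym // mul0r mulr0z.
rewrite -(sum_lt_delta (@e4 g) k j) -(sum_lt_delta (@e4 g) j k) -big_split.
apply: eq_bigr => y _; rewrite -big_split; apply: eq_bigr => z hyz.
rewrite /= -mulrzDr ffunE /= ifN; first by rewrite [delta j y * _]mulrC.
by apply: contraTneq hyz => ->; rewrite ltnn.
Qed.

(* The correction 2_{i,j,k} - section(b'_k b'_j) lies in the proposed
   subgroup: it is a difference of type 2-2, 2-4 or 4-4, or zero. *)
Lemma correction_e2 g (hg : (2 <= g)%N) (i j k : 'I_g) : k != i ->
  zgen (@Ngens g) (e2 i j k - trace_section (monom k j)).
Proof.
move=> hki; have hik : i != k by rewrite eq_sym.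
rewrite trace_section_monom; case: (eqVneq j k) => [->|hjk].
  rewrite delta_refl mulr1z ltnn !addr0; apply: zgen_gen; right; right; left.
  by exists i, (other k), k; rewrite other_neq.
rewrite delta_neq // mulr0z add0r; case: (eqVneq j i) => [eji|hji].
  rewrite eji; case: (ltngtP k i) => [_|_|/val_inj ek]; last first.
  - by rewrite ek eqxx in hki.
  - by rewrite add0r subrr; apply: zgen0.
  by rewrite addr0; apply: zgen_gen; do 4 right; exists i, k.
apply: zgen_gen; do 3 right; left.
have hij : i != j by rewrite eq_sym.
exists i, i, j, k; split; first by rewrite !inE !negb_or hij hik.
case: (ltngtP k j) => [_|_|/val_inj ekj]; last by rewrite ekj eqxx in hjk.
- by rewrite addr0; apply: Or44.
- by rewrite add0r; apply: Or43.
Qed.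

Lemma correction_Wgens g (hg : (2 <= g)%N) (p : T4 g) :
  Wgens p -> zgen (@Ngens g) (p - trace_section (TrA p)).
Proof.
case=> i [j [k [l ->]]]; case: (eqVneq k l) => [<-|hkl].
  by rewrite Tel_diag 2!raddf0 subr0; apply: zgen0.
rewrite TrA_Tel; case: (eqVneq l i) => [eli|hli]; case: (eqVneq k i) => [eki|hki].
- by rewrite eki eli eqxx in hkl.
- by rewrite eli subr0; apply: correction_e2.
- rewrite eki sub0r raddfN Tel_swap opprK addrC -opprB; apply: zgen_opp.
  exact: correction_e2.
- rewrite subr0 raddf0 subr0; apply: zgen_gen.
  case: (eqVneq i j) => [<-|hij]; first by right; left; exists i, k, l; rewrite !(eq_sym i).
  by left; exists i, j, k, l; rewrite hij !(eq_sym i).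
Qed.

Lemma Wgens_e2 g (i j k : 'I_g) : Wgens (e2 i j k). Proof. by exists i, j, k, i. Qed.
Lemma Wgens_e4 g (i k : 'I_g) : Wgens (e4 i k). Proof. by exists i, i, k, i. Qed.

(* Each proposed generator lies in W and has trace zero: types 1 and 3 have
   trace 0 outright, and the differences have equal traces. *)
Lemma Ngens_in_N g (q : T4 g) : Ngens q -> zgen (@Wgens g) q /\ TrA q = 0.
Proof.
case=> [[i [j [k [l [[_ hik hil] ->]]]]] | [[i [k [l [[hik hil] ->]]]] |
        [[i [i' [j [[hij hi'j] ->]]]] | [[i [i' [j [k [[hi hi' hjk] hq]]]]] |
        [i [k [hik ->]]]]]]].
- split; first by apply: zgen_gen; exists i, j, k, l.
  by rewrite TrA_Tel !(eq_sym _ i) (negbTE hil) (negbTE hik) subr0.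
- split; first by apply: zgen_gen; exists i, i, k, l.
  by rewrite TrA_Tel !(eq_sym _ i) (negbTE hil) (negbTE hik) subr0.
- split; first exact: zgen_diff (Wgens_e2 _ _ _) (Wgens_e2 _ _ _).
  by rewrite raddfB /= !TrA_e2 ?subrr // eq_sym.
- move: hi hi'; rewrite !inE !negb_or => /andP[hij hik] /andP[hi'j hi'k].
  have [hji hki hji' hki'] : [/\ j != i, k != i, j != i' & k != i'].
    by rewrite !(eq_sym _ i) !(eq_sym _ i').
  have hkj : k != j by rewrite eq_sym.
  case: hq => ->; split; solve [
      exact: zgen_diff (Wgens_e2 _ _ _) (Wgens_e2 _ _ _)
    | exact: zgen_diff (Wgens_e2 _ _ _) (Wgens_e4 _ _)
    | by rewrite raddfB /= TrA_e2 ?TrA_e2 ?TrA_e4 // ?subrr // monomC subrr ].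
- split; first exact: zgen_diff (Wgens_e4 _ _) (Wgens_e4 _ _).
  have hki : k != i by rewrite eq_sym.
  by rewrite raddfB /= !TrA_e4 // monomC subrr.
Qed.

Theorem proposition5p4 (g : nat) (hg : (2 <= g)%N) (t : T4 g) :
  N t <-> zgen (@Ngens g) t.
Proof. exact: kernel_generated (correction_Wgens hg) (@Ngens_in_N g) t. Qed.
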